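(* Let $n\ge 2$ and $1\le r\le n$. Then for every vertex $v\in V(P_n^* )$, $$|\mathcal{I}^{(r)}_v(P_n^* )|\le |\mathcal{I}^{(r)}_{p_2}(P_n^* )| = |\mathcal{I}^{(r)}_{p_{n-1}}(P_n^* )|,$$ i.e. the $r$-stars centred at the pendant vertices $p_2$ and $p_{n-1}$ are $r$-stars of maximum size in $P_n^*$.
   Context: An independent $r$-set of a graph $G$ is a set of $r$ pairwise non-adjacent vertices; $\mathcal{I}^{(r)}(G)$ is the family of independent $r$-sets of $G$, and $\mathcal{I}^{(r)}_v(G)$ the subfamily of those containing $v$ (the $r$-star centred at $v$). For a graph $G$ with vertices $x_1,\dots,x_n$, the pendant graph $G^*$ has vertex set $\{x_1,\dots,x_n\}\sqcup\{p_1,\dots,p_n\}$ and edge set $E(G)\sqcup\{x_1p_1,\dots,x_np_n\}$. $P_n$ is the path with vertices $x_1,\dots,x_n$ and edges $x_ix_{i+1}$, $1\le i\le n-1$, and $P_n^*$ is its pendant graph. *)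

From mathcomp Require Import all_boot.
Set Implicit Arguments. Unset Strict Implicit. Unset Printing Implicit Defensive.

(* Vertices of the pendant path P_n^*: inl i is x_(i+1), inr i is p_(i+1). *)
Definition pvert (n : nat) : finType := ('I_n + 'I_n)%type.

Definition path_adj (n : nat) (i j : 'I_n) : bool :=
  (i.+1 == j :> nat) || (j.+1 == i :> nat).

Definition pendant_adj (n : nat) (u w : pvert n) : bool :=
  match u, w with
  | inl i, inl j => path_adj i j
  | inl i, inr j => i == j
  | inr i, inl j => i == j
  | inr _, inr _ => false
  end.

Definition independent (T : finType) (e : rel T) (S : {set T}) : bool :=
  [forall x in S, forall y in S, ~~ e x y].

Definition indep_rsets (T : finType) (e : rel T) (r : nat) : {set {set T}} :=
  [set S : {set T} | independent e S && (#|S| == r)].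

Definition rstar (T : finType) (e : rel T) (r : nat) (v : T) : {set {set T}} :=
  [set S in indep_rsets e r | v \in S].

(* For 2 <= n: the pendant vertices p_2 (index 1) and p_(n-1) (index n-2). *)
Lemma two_idx_lt (n : nat) : 2 <= n -> 1 < n.
Proof. by []. Qed.
Lemma nm2_idx_lt (n : nat) : 2 <= n -> n - 2 < n.
Proof. by case: n => [|[|n]] //= _; rewrite subn2 /= ltnS leqnSn. Qed.
Definition p_two (n : nat) (hn : 2 <= n) : pvert n := inr (Ordinal (two_idx_lt hn)).
Definition p_nm1 (n : nat) (hn : 2 <= n) : pvert n := inr (Ordinal (nm2_idx_lt hn)).

From mathcomp Require Import all_boot zify.
Set Implicit Arguments. Unset Strict Implicit. Unset Printing Implicit Defensive.

(* Every comparison between two r-stars of the pendant path P_n^* is proved by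
   an injection of one star into the other.  Almost all injections used are
   induced by a relabelling of the indices 0..n-1 (applied simultaneously to
   the path vertices x_k and to the pendant vertices p_k): such a relabelling
   preserves sizes and the pendant edges, so it maps an independent set to an
   independent set as soon as it creates no new path edge inside it.
   The theorem then follows from four comparisons (indices are 0-based, so
   p_2 is inr 1 and p_(n-1) is inr (n-2)):
   - |I_(x_k)| <= |I_(p_k)|, by exchanging x_k for p_k;
   - p_k and p_(n-1-k) have stars of the same size, by reversing the path;
   - |I_(p_1)| <= |I_(p_2)|, by the transposition of the indices 0 and 1;
   - |I_(p_i)| <= |I_(p_2)| for i >= 2, by moving index i to 1 and shifting
     1..i-1 up, unless the set contains both neighbours x_(i-1) and x_(i+1)
     of x_i, in which case a second relabelling (sending i-1, i, i+1 to 0, 1, 2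
     and reversing 0..i-2 onto 3..i+1) is used; the two images are disjoint
     since only the second one contains both x_0 and x_2. *)

Ltac case_ifs :=
  repeat match goal with |- context [if ?b then _ else _] => case: (boolP b) end.

Definition nat_adj (a b : nat) : bool := (a.+1 == b) || (b.+1 == a).

Lemma rstarE (T : finType) (e : rel T) r v S :
  (S \in rstar e r v) = [&& independent e S, #|S| == r & v \in S].
Proof. by rewrite !inE andbA. Qed.

Lemma independentP (T : finType) (e : rel T) (S : {set T}) :
  reflect (forall x y, x \in S -> y \in S -> ~~ e x y) (independent e S).
Proof.
apply: (iffP forallP) => [H x y xS yS | H x].
  by move: (H x); rewrite xS => /forallP/(_ y); rewrite yS.
by apply/implyP => xS; apply/forallP => y; apply/implyP => yS; apply: H.
Qed.

Lemma card_rstar_le (T : finType) (e : rel T) r v w (g : {set T} -> {set T}) :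
  (forall S, S \in rstar e r v -> g S \in rstar e r w) ->
  {in rstar e r v &, injective g} -> #|rstar e r v| <= #|rstar e r w|.
Proof.
move=> gS g_inj; rewrite -(card_in_imset g_inj); apply: subset_leq_card.
by apply/subsetP => _ /imsetP[S HS ->]; apply: gS.
Qed.

(* Relabelling of the vertices of P_n^* along an index map f : nat -> nat
   (left unchanged where f leaves 'I_n). *)
Definition relab (n : nat) (f : nat -> nat) (k : 'I_n) : 'I_n := insubd k (f k).

Definition relabv (n : nat) (f : nat -> nat) (u : pvert n) : pvert n :=
  match u with inl k => inl (relab f k) | inr k => inr (relab f k) end.

Section Relabelling.
Variables (n : nat) (f : nat -> nat).
Hypothesis f_lt : forall k : 'I_n, f k < n.
Hypothesis f_inj : forall j k : 'I_n, f j = f k -> j = k :> nat.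

Lemma relabE (k : 'I_n) : relab f k = f k :> nat.
Proof. by rewrite /relab insubdK //; apply: f_lt. Qed.

Lemma relab_inj : injective (@relab n f).
Proof. by move=> j k /(congr1 (@nat_of_ord n)); rewrite !relabE => /f_inj /val_inj. Qed.

Lemma relabv_inj : injective (@relabv n f).
Proof. by case=> [j|j] [k|k] //= [] /relab_inj ->. Qed.

(* The pendant edges are preserved, so only new path edges can break
   independence. *)
Lemma relabv_independent S : independent (@pendant_adj n) S ->
  (forall j k : 'I_n, inl j \in S -> inl k \in S -> ~~ nat_adj (f j) (f k)) ->
  independent (@pendant_adj n) (relabv f @: S).
Proof.
move=> /independentP S_indep f_adj.
apply/independentP => _ _ /imsetP[a aS ->] /imsetP[b bS ->].
case: a aS => [j|j] jS; case: b bS => [k|k] kS //=.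
- by rewrite /path_adj !relabE; apply: f_adj.
- by apply/negP => /eqP /relab_inj Ejk; move: (S_indep _ _ jS kS); rewrite Ejk /= eqxx.
- by apply/negP => /eqP /relab_inj Ejk; move: (S_indep _ _ jS kS); rewrite Ejk /= eqxx.
Qed.

Lemma relabv_rstar r v S : S \in rstar (@pendant_adj n) r v ->
  (forall j k : 'I_n, inl j \in S -> inl k \in S -> ~~ nat_adj (f j) (f k)) ->
  relabv f @: S \in rstar (@pendant_adj n) r (relabv f v).
Proof.
rewrite !rstarE => /and3P[S_indep S_card vS] f_adj.
by rewrite card_imset ?S_card ?relabv_independent ?imset_f //; apply: relabv_inj.
Qed.

Lemma relabv_set_inj : injective (fun S : {set pvert n} => relabv f @: S).
Proof. by apply: imset_inj; apply: relabv_inj. Qed.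

End Relabelling.

Lemma card_rstar_relab n r (f : nat -> nat) v w :
  (forall k : 'I_n, f k < n) -> (forall j k : 'I_n, f j = f k -> j = k :> nat) ->
  relabv f v = w ->
  (forall S, S \in rstar (@pendant_adj n) r v -> forall j k : 'I_n,
      inl j \in S -> inl k \in S -> ~~ nat_adj (f j) (f k)) ->
  #|rstar (@pendant_adj n) r v| <= #|rstar (@pendant_adj n) r w|.
Proof.
move=> f_lt f_inj <- f_adj; apply: card_rstar_le (fun S => relabv f @: S) _ _.
  by move=> S HS; apply: relabv_rstar => //; apply: f_adj.
by move=> S1 S2 _ _; apply: relabv_set_inj.
Qed.

Definition swap01 (k : nat) : nat := if k == 0 then 1 else if k == 1 then 0 else k.

Definition shift_to1 (i k : nat) : nat :=
  if k == 0 then 0 else if k == i then 1 else if k < i then k.+1 else k.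

Definition fold_to2 (i k : nat) : nat :=
  if k == i.-1 then 0 else if k == i then 1 else if k == i.+1 then 2
  else if k < i.-1 then i.+1 - k else k.

Lemma swap01_inj j k : swap01 j = swap01 k -> j = k.
Proof. by rewrite /swap01; case_ifs; lia. Qed.

Lemma shift_to1_inj i j k : shift_to1 i j = shift_to1 i k -> j = k.
Proof. by rewrite /shift_to1; case_ifs; lia. Qed.

Lemma fold_to2_inj i j k : 0 < i -> fold_to2 i j = fold_to2 i k -> j = k.
Proof. by rewrite /fold_to2 => ?; case_ifs; lia. Qed.

Lemma shift_to1_nonadj i j k : 2 <= i -> j <> i -> k <> i -> ~~ nat_adj j k ->
  ~ (j.+1 = i /\ k = i.+1) -> ~ (k.+1 = i /\ j = i.+1) ->
  ~~ nat_adj (shift_to1 i j) (shift_to1 i k).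
Proof. by rewrite /nat_adj /shift_to1 => *; case_ifs; lia. Qed.

Lemma fold_to2_nonadj i j k : 2 <= i -> j <> i -> k <> i -> ~~ nat_adj j k ->
  j.+2 <> i -> k.+2 <> i -> j <> i.+2 -> k <> i.+2 ->
  ~~ nat_adj (fold_to2 i j) (fold_to2 i k).
Proof. by rewrite /nat_adj /fold_to2 => *; case_ifs; lia. Qed.

Lemma fold_to2_pred i : fold_to2 i i.-1 = 0.
Proof. by rewrite /fold_to2 eqxx. Qed.

Lemma fold_to2_succ i : 0 < i -> fold_to2 i i.+1 = 2.
Proof. by rewrite /fold_to2 => ?; case_ifs; lia. Qed.

Lemma shift_to1_0_2 i j k : 2 <= i -> shift_to1 i j = 0 -> shift_to1 i k = 2 -> nat_adj j k.
Proof. by rewrite /nat_adj /shift_to1; case_ifs; lia. Qed.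

Section PendantPathStars.
Variables (n r : nat).

Local Notation star v := (rstar (@pendant_adj n) r v).

Lemma star_center v S : S \in star v -> v \in S.
Proof. by rewrite rstarE => /and3P[]. Qed.

Lemma star_path_nonadj v S (j k : 'I_n) :
  S \in star v -> inl j \in S -> inl k \in S -> ~~ nat_adj j k.
Proof. by rewrite rstarE => /and3P[/independentP S_indep _ _] jS kS; apply: S_indep jS kS. Qed.

Lemma star_path_pendant_neq v S (j k : 'I_n) :
  S \in star v -> inl j \in S -> inr k \in S -> j <> k :> nat.
Proof.
rewrite rstarE => /and3P[/independentP S_indep _ _] jS kS /val_inj Ejk.
by move: (S_indep _ _ jS kS); rewrite Ejk /= eqxx.
Qed.

Lemma star_path_le_pendant (i : 'I_n) : #|star (inl i)| <= #|star (inr i)|.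
Proof.
have p_notin S : S \in star (inl i) -> inr i \notin S.
  by move=> HS; apply/negP => /(star_path_pendant_neq HS (star_center HS)).
apply: card_rstar_le (fun S => inr i |: (S :\ inl i)) _ _.
  move=> S HS; have pS := p_notin S HS; move: HS.
  rewrite !rstarE => /and3P[/independentP S_indep /eqP S_card xS].
  rewrite setU11 andbT; apply/andP; split.
    apply/independentP => x y; rewrite !inE.
    case/predU1P=> [->|/andP[xi xS']]; case/predU1P=> [->|/andP[yi yS']] //.
    - by case: y yi yS' => // k ki _ /=; apply: contra ki => /eqP ->.
    - exact: S_indep.
  by rewrite cardsU1 !inE /= pS -S_card (cardsD1 (inl i) S) xS.
move=> S1 S2 H1 H2 E.
have undo S : S \in star (inl i) -> inl i |: ((inr i |: (S :\ inl i)) :\ inr i) = S.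
  move=> HS; rewrite setU1K; last by rewrite !inE negb_and (p_notin S HS) orbT.
  exact: setD1K (star_center HS).
by rewrite -(undo _ H1) E undo.
Qed.

Lemma star_pendant_reflect (a b : 'I_n) :
  a + b = n.-1 -> #|star (inr a)| <= #|star (inr b)|.
Proof.
move=> Eab; apply: (@card_rstar_relab n r (fun k => n.-1 - k)).
- by move=> k; have := ltn_ord k; lia.
- by move=> j k; have := ltn_ord j; have := ltn_ord k; lia.
- by congr inr; apply: ord_inj; rewrite relabE /=; [lia | move=> k; have := ltn_ord k; lia].
- move=> S HS j k jS kS; have := star_path_nonadj HS jS kS; rewrite /nat_adj.
  by have := ltn_ord j; have := ltn_ord k; lia.
Qed.

(* Transposing the indices 0 and 1 injects the star at p_1 into the star at
   p_2: a member containing p_1 avoids x_1, so moving x_2 onto x_1 creates no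
   path edge. *)
Lemma star_p1_le_p2 (a b : 'I_n) : a = 0 :> nat -> b = 1 :> nat ->
  #|star (inr a)| <= #|star (inr b)|.
Proof.
move=> Ea Eb; have n_gt1 : 1 < n by rewrite -Eb ltn_ord.
have swap01_lt (k : 'I_n) : swap01 k < n.
  by have := ltn_ord k; rewrite /swap01; case_ifs; lia.
apply: (@card_rstar_relab n r swap01) => //.
- by move=> j k /swap01_inj.
- by congr inr; apply: ord_inj; rewrite relabE // Ea Eb.
move=> S HS j k jS kS; have := star_path_nonadj HS jS kS.
have := star_path_pendant_neq HS jS (star_center HS).
have := star_path_pendant_neq HS kS (star_center HS).
by rewrite /nat_adj /swap01 Ea; case_ifs; lia.
Qed.

Definition straddles (i : nat) (S : {set pvert n}) : bool :=
  [exists j : 'I_n, exists k : 'I_n,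
     [&& inl j \in S, inl k \in S, j.+1 == i :> nat & k == i.+1 :> nat]].

Lemma straddlesP i (S : {set pvert n}) : reflect
  (exists j k : 'I_n, [/\ inl j \in S, inl k \in S, j.+1 = i & k = i.+1 :> nat])
  (straddles i S).
Proof.
apply: (iffP existsP) => [[j /existsP[k /and4P[jS kS /eqP Ej /eqP Ek]]]|[j [k [jS kS Ej Ek]]]].
  by exists j, k.
by exists j; apply/existsP; exists k; rewrite jS kS Ej Ek !eqxx.
Qed.

Section LargeIndex.
Variables (i b : 'I_n).
Hypotheses (i_ge2 : 2 <= i) (Eb : b = 1 :> nat).

Lemma shift_to1_lt (k : 'I_n) : shift_to1 i k < n.
Proof. by have := ltn_ord k; have := ltn_ord i; rewrite /shift_to1; case_ifs; lia. Qed.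

Lemma fold_to2_lt : i.+1 < n -> forall k : 'I_n, fold_to2 i k < n.
Proof. by move=> lt_i1 k; have := ltn_ord k; rewrite /fold_to2; case_ifs; lia. Qed.

Lemma shift_to1_rstar S : S \in star (inr i) -> ~~ straddles i S ->
  relabv (shift_to1 i) @: S \in star (inr b).
Proof.
move=> HS not_straddle.
have -> : inr b = relabv (shift_to1 i) (inr i).
  congr inr; apply: ord_inj; rewrite relabE ?Eb; last exact: shift_to1_lt.
  by rewrite /shift_to1 eqxx ifN //; lia.
apply: (relabv_rstar shift_to1_lt) (HS) _ => [j k /shift_to1_inj //|j k jS kS].
have iS := star_center HS.
apply: shift_to1_nonadj => //.
- exact: star_path_pendant_neq HS jS iS.
- exact: star_path_pendant_neq HS kS iS.
- exact: star_path_nonadj HS jS kS.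
- by case=> Ej Ek; move/straddlesP: not_straddle; apply; exists j, k.
- by case=> Ek Ej; move/straddlesP: not_straddle; apply; exists k, j.
Qed.

Lemma fold_to2_rstar S : S \in star (inr i) -> straddles i S ->
  relabv (fold_to2 i) @: S \in star (inr b).
Proof.
move=> HS /straddlesP[j0 [k0 [j0S k0S Ej0 Ek0]]].
have lt_i1 : i.+1 < n by rewrite -Ek0.
have -> : inr b = relabv (fold_to2 i) (inr i).
  congr inr; apply: ord_inj; rewrite relabE ?Eb; last exact: fold_to2_lt.
  by rewrite /fold_to2 ifN ?eqxx //; lia.
apply: (relabv_rstar (fold_to2_lt lt_i1)) (HS) _ => [j k|j k jS kS].
  by apply: fold_to2_inj; lia.
have iS := star_center HS.
have jk := star_path_nonadj HS jS kS.
have ji := star_path_pendant_neq HS jS iS; have ki := star_path_pendant_neq HS kS iS.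
move: (star_path_nonadj HS jS j0S) (star_path_nonadj HS jS k0S).
move: (star_path_nonadj HS kS j0S) (star_path_nonadj HS kS k0S).
by rewrite /nat_adj => *; apply: fold_to2_nonadj => //; lia.
Qed.

(* The two relabelled families are disjoint: an image under [fold_to2 i]
   contains x_0 and x_2, while under [shift_to1 i] these come from adjacent
   vertices. *)
Lemma fold_shift_disjoint S S' : S' \in star (inr i) ->
  straddles i S -> relabv (fold_to2 i) @: S <> relabv (shift_to1 i) @: S'.
Proof.
move=> HS' /straddlesP[j0 [k0 [j0S k0S Ej0 Ek0]]] E.
have lt_i1 : i.+1 < n by rewrite -Ek0.
have image_of (u : 'I_n) : inl u \in S ->
    exists2 k : 'I_n, inl k \in S' & shift_to1 i k = fold_to2 i u.
  move=> uS; move: (imset_f (relabv (fold_to2 i)) uS); rewrite E.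
  case/imsetP=> -[k|k] // kS [Ek]; exists k => //.
  by move: (congr1 (@nat_of_ord n) Ek); rewrite (relabE (fold_to2_lt lt_i1)) (relabE shift_to1_lt).
have [j jS Ej] := image_of j0 j0S; have [k kS Ek] := image_of k0 k0S.
have Ej0' : (j0 : nat) = i.-1 by lia.
rewrite Ej0' fold_to2_pred in Ej; rewrite Ek0 fold_to2_succ in Ek; last exact: leq_trans i_ge2.
by move: (star_path_nonadj HS' jS kS); rewrite (shift_to1_0_2 i_ge2 Ej Ek).
Qed.

Lemma star_large_le_p2 : #|star (inr i)| <= #|star (inr b)|.
Proof.
pose g S := if straddles i S then relabv (fold_to2 i) @: S
            else relabv (shift_to1 i) @: S.
apply: (card_rstar_le (g := g)) => [S HS|S1 S2 H1 H2].
  by rewrite /g; case: ifP => [|/negbT]; [apply: fold_to2_rstar | apply: shift_to1_rstar].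
rewrite /g; case: ifP => C1; case: ifP => C2 E.
- have [j0 [k0 [_ _ _ Ek0]]] := straddlesP _ _ C1.
  apply: relabv_set_inj E => [|j k]; first by apply: fold_to2_lt; rewrite -Ek0.
  by apply: fold_to2_inj; lia.
- by case: (fold_shift_disjoint H2 C1 E).
- by case: (fold_shift_disjoint H1 C2 (esym E)).
- by apply: relabv_set_inj E => // [|j k /shift_to1_inj]; first exact: shift_to1_lt.
Qed.

End LargeIndex.

Lemma star_pendant_le_p2 (i b : 'I_n) : b = 1 :> nat -> #|star (inr i)| <= #|star (inr b)|.
Proof.
move=> Eb; case: (ltngtP i 1) => [i_lt1|i_gt1|Ei].
- by apply: star_p1_le_p2 => //; lia.
- exact: star_large_le_p2.
- by rewrite (_ : i = b) //; apply: ord_inj; rewrite Ei Eb.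
Qed.

End PendantPathStars.

Theorem theorem5 (n r : nat) (hn : 2 <= n) (hr1 : 1 <= r) (hrn : r <= n) :
  (forall v : pvert n,
     #|rstar (@pendant_adj n) r v| <= #|rstar (@pendant_adj n) r (p_two hn)|) /\
  #|rstar (@pendant_adj n) r (p_two hn)| = #|rstar (@pendant_adj n) r (p_nm1 hn)|.
Proof.
have to_p2 (i : 'I_n) :
  #|rstar (@pendant_adj n) r (inr i)| <= #|rstar (@pendant_adj n) r (p_two hn)|.
  exact: (@star_pendant_le_p2 n r i (Ordinal (two_idx_lt hn))).
split.
  case=> i; last exact: to_p2.
  exact: leq_trans (star_path_le_pendant r i) (to_p2 i).
by apply/eqP; rewrite eqn_leq !star_pendant_reflect //=; lia.
Qed.
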